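(* Every topological space $X$ that admits a selection map has the universal fixed point property. Conversely, if $X$ is a topological space with the universal fixed point property for which the evaluation map $C(X,X)\times X\to X$, $(f,x)\mapsto f(x)$, is continuous, then $X$ admits a selection map.
   Context: For a topological space $X$, let $C(X,X)$ be the set of continuous self-maps of $X$ with the compact-open topology (generated by the sets $\{g\mid g(K)\subseteq U\}$, $K\subseteq X$ compact, $U\subseteq X$ open). A selection map for $X$ is a continuous map $\Phi\colon C(X,X)\to X$ such that $f(\Phi(f))=\Phi(f)$ for all $f\in C(X,X)$. The space $X$ has the universal fixed point property if for every topological space $T$ and every continuous map $f\colon T\times X\to X$ there exists a continuous map $p\colon T\to X$ with $f(t,p(t))=p(t)$ for all $t\in T$. *)

From HB Require Import structures.
From mathcomp Require Import all_boot all_order all_algebra.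
From mathcomp Require Import all_classical all_reals all_analysis.
Set Implicit Arguments. Unset Strict Implicit. Unset Printing Implicit Defensive.
Local Open Scope classical_set_scope.

(* The space of all self-maps of X with the compact-open topology
   (mathcomp-analysis' [compact_open]); C(X,X) is the subspace of continuous
   maps, handled via [{within @cmaps X, continuous _}]. *)
Definition cmaps (X : topologicalType) : set {compact-open, X -> X} :=
  [set f | continuous f].

Definition selection_map (X : topologicalType) (Phi : {compact-open, X -> X} -> X) : Prop :=
  {within @cmaps X, continuous Phi} /\
  (forall f : {compact-open, X -> X}, continuous f -> f (Phi f) = Phi f).

Definition admits_selection_map (X : topologicalType) : Prop :=
  exists Phi : {compact-open, X -> X} -> X, selection_map Phi.

Definition universal_fixed_point_property (X : topologicalType) : Prop :=
  forall (T : topologicalType) (f : T * X -> X), continuous f ->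
    exists p : T -> X, continuous p /\ (forall t, f (t, p t) = p t).

Definition evaluation_continuous (X : topologicalType) : Prop :=
  {within [set fx : {compact-open, X -> X} * X | continuous fx.1],
    continuous (fun fx : {compact-open, X -> X} * X => fx.1 fx.2)}.

From HB Require Import structures.
From mathcomp Require Import all_boot all_order all_algebra.
From mathcomp Require Import all_classical all_reals all_analysis.
Local Open Scope classical_set_scope.

(* A selection map Phi turns a parametrized family f : T * X -> X into the
   fixed point t |-> Phi (curry f t), which is continuous because currying is
   continuous into the compact-open topology.  Conversely, a selection map is a
   fixed point map of the family (f, x) |-> f x, parametrized by C(X,X) itself;
   to apply the universal fixed point property to the subspace C(X,X) of all
   self-maps, this family is extended by the identity off C(X,X), which is
   harmless because those points are isolated in the subspace topology. *)

Lemma continuous_comp_within {T U V : topologicalType} {A : set U}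
    (g : T -> U) (phi : U -> V) :
  (forall t, A (g t)) -> continuous g -> {within A, continuous phi} ->
  continuous (phi \o g).
Proof.
move=> gA cg /subspace_continuousP cphi t.
have gW : g @ t --> within A (nbhs (g t)).
  move=> W; rewrite /= nbhs_simpl => /cg; rewrite /= !nbhs_simpl.
  by apply: (@filterS _ (nbhs t)) => s /(_ (gA s)).
exact: cvg_comp gW (cphi _ (gA t)).
Qed.

Lemma continuous_subspace_patch {U X Y : topologicalType} {A : set U}
    (e : U * X -> Y) (d : X -> Y) :
  {within [set p | A p.1], continuous e} -> continuous d ->
  continuous (fun p : subspace A * X => if `[< A p.1 >] then e p else d p.2).
Proof.
move=> ce cd [g x] W /=; case: (asboolP (A g)) => Ag Wn.
- have := ce (g, x) W Wn.
  case: (nbhs_subspaceP [set p | A p.1] (g, x)) => //= _.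
  move=> [[P Q] /= [Pg Qx] PQW].
  exists (P `&` A, Q) => /=.
    split => //; case: (nbhs_subspaceP A g) => // _.
    by apply: filterS Pg => h Ph Ah.
  by move=> [h y] [/= [Ph Ah] Qy]; case: asboolP => // _; apply: (PQW (h, y)).
- exists ([set g], d @^-1` W) => /=.
    split; last exact: cd.
    by case: (nbhs_subspaceP A g) => // _ h ->.
  by move=> [h y] [/= -> Wy]; case: asboolP.
Qed.

Lemma selection_map_universal_fixed_point (X : topologicalType) :
  admits_selection_map X -> universal_fixed_point_property X.
Proof.
move=> [Phi [cPhi Phi_fixed]] T f cf.
have [cf_curry cf_slice] := continuous_curry cf.
exists (Phi \o curry f); split; last by move=> t; exact: Phi_fixed.
exact: (@continuous_comp_within _ _ _ (@cmaps X) _ Phi cf_slice cf_curry cPhi).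
Qed.

Lemma universal_fixed_point_selection_map (X : topologicalType) :
  universal_fixed_point_property X -> evaluation_continuous X ->
  admits_selection_map X.
Proof.
move=> ufp ev.
pose F (p : subspace (@cmaps X) * X) :=
  if `[< cmaps p.1 >] then p.1 p.2 else p.2.
have cF : continuous F.
  exact: (continuous_subspace_patch (fun p : {compact-open, X -> X} * X => p.1 p.2)
            id ev (fun=> cvg_id)).
have [Phi [cPhi Phi_fixed]] := ufp _ F cF.
exists Phi; split => // g cg.
by have := Phi_fixed g; rewrite /F; case: asboolP.
Qed.

Theorem theorem7p3 :
  (forall X : topologicalType,
     admits_selection_map X -> universal_fixed_point_property X) /\
  (forall X : topologicalType,
     universal_fixed_point_property X -> evaluation_continuous X ->
     admits_selection_map X).
Proof.
split; [exact: selection_map_universal_fixed_point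
       | exact: universal_fixed_point_selection_map].
Qed.
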